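(* Assume Non-Degeneracy Assumption I, and let $U,P$ be the optimal solutions constructed from a base sequence and a nonnegative solution of the base-sequence system as in the Structure Theorem part (i) (all boundary values, $\tau_n$, $x^n$, $q^n$ nonnegative). Let $\check U=\int_0^Tu(t)dt=\sum_n\tau_nu^n$ and $\check P=\int_0^Tp(t)dt=\sum_n\tau_np^n$. Then $(\mathbf{u}^0,\mathbf{u}^N)$ is an optimal solution of the LP $$\max\ (\gamma+cT-A^\top\check P)^\top\mathbf{u}^0+\gamma^\top\mathbf{u}^N\ \text{ s.t. } A\mathbf{u}^0\le\beta,\ A\mathbf{u}^0+A\mathbf{u}^N\le\beta+bT-A\check U,\ \mathbf{u}^0,\mathbf{u}^N\ge0,$$ and $(\mathbf{p}^N,\mathbf{p}^0)$ is an optimal solution of its dual LP $$\min\ (\beta+bT-A\check U)^\top\mathbf{p}^N+\beta^\top\mathbf{p}^0\ \text{ s.t. } A^\top\mathbf{p}^N\ge\gamma,\ A^\top\mathbf{p}^N+A^\top\mathbf{p}^0\ge\gamma+cT-A^\top\check P,\ \mathbf{p}^N,\mathbf{p}^0\ge0.$$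
   Context: Let $A$ be a real $K\times J$ matrix, $\beta,b\in\mathbb{R}^K$, $\gamma,c\in\mathbb{R}^J$, $T>0$. M-CLP: maximize $\int_{0-}^T(\gamma+(T-t)c)^\top dU(t)$ over nonnegative, non-decreasing, right-continuous $U:[0,T]\to\mathbb{R}^J$ with $U(0-)=0$, subject to $AU(t)\le\beta+bt$, $0\le t\le T$. M-CLP$^*$: minimize $\int_{0-}^T(\beta+(T-t)b)^\top dP(t)$ over nonnegative, non-decreasing, right-continuous $P:[0,T]\to\mathbb{R}^K$ with $P(0-)=0$, subject to $A^\top P(t)\ge\gamma+ct$. Non-Degeneracy Assumption I: $b$ is not a linear combination of fewer than $K$ columns of $[A\ I]$ and $c$ is not a linear combination of fewer than $J$ columns of $[A^\top\ I]$. Bases: index sets $\mathcal{K}\subseteq\{1..K\},\mathcal{J}\subseteq\{1..J\}$ such that $\dot x_k$ ($k\in\mathcal{K}$), $u_j$ ($j\notin\mathcal{J}$) are $K$ variables with independent columns in $[A\ I]$; primal basic solution solves $Au+\dot x=b$ with $u_j=0$ ($j\in\mathcal{J}$), $\dot x_k=0$ ($k\notin\mathcal{K}$); dual basic solution solves $A^\top p-\dot q=c$ with $p_k=0$ ($k\in\mathcal{K}$), $\dot q_j=0$ ($j\notin\mathcal{J}$). Admissible: $u,p\ge0$. Adjacent: one pivot apart, primal variable $v_n$ leaving from $B_n$ to $B_{n+1}$. A base sequence consists of admissible, consecutively adjacent bases $B_1..B_N$ (index sets $\mathcal{K}_n,\mathcal{J}_n$, rates $u^n,\dot x^n,p^n,\dot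 q^n$) plus index sets $\mathcal{K}_0,\mathcal{J}_0,\mathcal{K}_{N+1},\mathcal{J}_{N+1}$ with $\mathcal{K}_0\subseteq\mathcal{K}_1$, $\mathcal{J}_{N+1}\subseteq\mathcal{J}_N$. The base-sequence system in unknowns $\mathbf{u}^0,\mathbf{u}^N,q^N,\mathbf{q}^0\in\mathbb{R}^J$, $x^0,\mathbf{x}^N,\mathbf{p}^0,\mathbf{p}^N\in\mathbb{R}^K$, $\tau_1..\tau_N$, with $x^n=x^0+\sum_{m\le n}\dot x^m\tau_m$, $q^n=q^N+\sum_{m>n}\dot q^m\tau_m$, is: (a) $x^n_k=0$ if $v_n=\dot x_k$, $q^n_j=0$ if $v_n=u_j$ ($n=1..N-1$); (b) $\sum\tau_n=T$; (c) $\mathbf{u}^0_j=0$ ($j\in\mathcal{J}_0$), $x^0_k=0$ ($k\notin\mathcal{K}_0$), $\mathbf{p}^0_k=0$ ($k\in\mathcal{K}_0$), $\mathbf{q}^0_j=0$ ($j\notin\mathcal{J}_0$), $\mathbf{p}^N_k=0$ ($k\in\mathcal{K}_{N+1}$), $q^N_j=0$ ($j\notin\mathcal{J}_{N+1}$), $\mathbf{u}^N_j=0$ ($j\in\mathcal{J}_{N+1}$), $\mathbf{x}^N_k=0$ ($k\notin\mathcal{K}_{N+1}$); (d) $A\mathbf{u}^0+x^0=\beta$, $A^\top\mathbf{p}^N-q^N=\gamma$; (e) $A\mathbf{u}^N+\mathbf{x}^N-x^N=0$, $A^\top\mathbf{p}^0-\mathbf{q}^0+q^0=0$. Constructed functions: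 $t_n=\sum_{m\le n}\tau_m$, $u(t)=u^n$ on $(t_{n-1},t_n)$, $U(t)=\mathbf{u}^0+\int_0^tu$ ($t<T$), $U(T)=U(T-)+\mathbf{u}^N$; $p(s)=p^n$ on $(T-t_n,T-t_{n-1})$, $P(s)=\mathbf{p}^N+\int_0^sp$ ($s<T$), $P(T)=P(T-)+\mathbf{p}^0$. *)

From HB Require Import structures.
From mathcomp Require Import all_boot all_order all_algebra.
Set Implicit Arguments. Unset Strict Implicit. Unset Printing Implicit Defensive.
Import Order.TTheory GRing.Theory Num.Theory.
Local Open Scope ring_scope.

Section MCLP.
Variable R : realFieldType.
Variables K J : nat.

Definition lecv (n : nat) (x y : 'cV[R]_n) : Prop := forall i, x i 0 <= y i 0.
Definition dotv (n : nat) (x y : 'cV[R]_n) : R := \sum_i x i 0 * y i 0.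

Definition nondeg_I (A : 'M[R]_(K, J)) (b : 'cV[R]_K) (c : 'cV[R]_J) : Prop :=
  (forall S : {set 'I_(J + K)}, (#|S| < K)%N ->
     ~ exists w : 'cV[R]_(J + K),
         (forall i, i \notin S -> w i 0 = 0) /\ row_mx A (1%:M : 'M[R]_K) *m w = b)
  /\
  (forall S : {set 'I_(K + J)}, (#|S| < J)%N ->
     ~ exists w : 'cV[R]_(K + J),
         (forall i, i \notin S -> w i 0 = 0) /\ row_mx A^T (1%:M : 'M[R]_J) *m w = c).

(* primal variables: inl j = u_j, inr k = xdot_k *)
Definition pvar := ('I_J + 'I_K)%type.

Definition basicvars (Ks : {set 'I_K}) (Js : {set 'I_J}) : {set pvar} :=
  [set v : pvar | match v with inl j => j \notin Js | inr k => k \in Ks end].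

Definition is_base (A : 'M[R]_(K, J)) (Ks : {set 'I_K}) (Js : {set 'I_J}) : Prop :=
  #|basicvars Ks Js| = K /\
  forall (wu : 'cV[R]_J) (wx : 'cV[R]_K),
    (forall j, j \in Js -> wu j 0 = 0) ->
    (forall k, k \notin Ks -> wx k 0 = 0) ->
    A *m wu + wx = 0 -> wu = 0 /\ wx = 0.

Definition primal_basic (A : 'M[R]_(K, J)) (b : 'cV[R]_K)
  (Ks : {set 'I_K}) (Js : {set 'I_J}) (u : 'cV[R]_J) (xd : 'cV[R]_K) : Prop :=
  A *m u + xd = b /\ (forall j, j \in Js -> u j 0 = 0)
  /\ (forall k, k \notin Ks -> xd k 0 = 0).

Definition dual_basic (A : 'M[R]_(K, J)) (c : 'cV[R]_J)
  (Ks : {set 'I_K}) (Js : {set 'I_J}) (p : 'cV[R]_K) (qd : 'cV[R]_J) : Prop :=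
  A^T *m p - qd = c /\ (forall k, k \in Ks -> p k 0 = 0)
  /\ (forall j, j \notin Js -> qd j 0 = 0).

Definition admissible_base (A : 'M[R]_(K, J)) (b : 'cV[R]_K) (c : 'cV[R]_J)
  (Ks : {set 'I_K}) (Js : {set 'I_J})
  (u : 'cV[R]_J) (xd : 'cV[R]_K) (p : 'cV[R]_K) (qd : 'cV[R]_J) : Prop :=
  is_base A Ks Js /\ primal_basic A b Ks Js u xd /\ dual_basic A c Ks Js p qd
  /\ lecv 0 u /\ lecv 0 p.

Definition adjacent (Ks1 : {set 'I_K}) (Js1 : {set 'I_J})
  (Ks2 : {set 'I_K}) (Js2 : {set 'I_J}) (v : pvar) : Prop :=
  v \in basicvars Ks1 Js1 /\ v \notin basicvars Ks2 Js2 /\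
  #|basicvars Ks1 Js1 :\: basicvars Ks2 Js2| = 1%N.

(* base sequence B_1..B_N (indices 1..N), with extra index sets at 0 and N+1 *)
Definition base_sequence (A : 'M[R]_(K, J)) (b : 'cV[R]_K) (c : 'cV[R]_J)
  (N : nat) (Ks : nat -> {set 'I_K}) (Js : nat -> {set 'I_J})
  (u : nat -> 'cV[R]_J) (xd : nat -> 'cV[R]_K)
  (p : nat -> 'cV[R]_K) (qd : nat -> 'cV[R]_J) (v : nat -> pvar) : Prop :=
  (0 < N)%N /\
  (forall n, (1 <= n <= N)%N -> admissible_base A b c (Ks n) (Js n) (u n) (xd n) (p n) (qd n)) /\
  (forall n, (1 <= n < N)%N -> adjacent (Ks n) (Js n) (Ks n.+1) (Js n.+1) (v n)) /\
  Ks 0%N \subset Ks 1%N /\ Js N.+1 \subset Js N.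

Definition xcurve (x0 : 'cV[R]_K) (xd : nat -> 'cV[R]_K) (tau : nat -> R) (n : nat)
  : 'cV[R]_K := x0 + \sum_(1 <= m < n.+1) tau m *: xd m.
Definition qcurve (N : nat) (qN : 'cV[R]_J) (qd : nat -> 'cV[R]_J) (tau : nat -> R)
  (n : nat) : 'cV[R]_J := qN + \sum_(n.+1 <= m < N.+1) tau m *: qd m.

(* the base-sequence system (a)-(e); bold boundary values are u0 uN q0 pN p0 xN,
   and x0 = x^0, qN = q^N *)
Definition base_seq_system (A : 'M[R]_(K, J)) (beta : 'cV[R]_K) (gamma : 'cV[R]_J)
  (T : R) (N : nat) (Ks : nat -> {set 'I_K}) (Js : nat -> {set 'I_J})
  (xd : nat -> 'cV[R]_K) (qd : nat -> 'cV[R]_J) (v : nat -> pvar)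
  (u0 uN qN q0 : 'cV[R]_J) (x0 xN p0 pN : 'cV[R]_K) (tau : nat -> R) : Prop :=
  (* (a) *)
  (forall n, (1 <= n < N)%N ->
     (forall k, v n = inr k -> xcurve x0 xd tau n k 0 = 0) /\
     (forall j, v n = inl j -> qcurve N qN qd tau n j 0 = 0)) /\
  (* (b) *)
  \sum_(1 <= n < N.+1) tau n = T /\
  (* (c) *)
  (forall j, j \in Js 0%N -> u0 j 0 = 0) /\
  (forall k, k \notin Ks 0%N -> x0 k 0 = 0) /\
  (forall k, k \in Ks 0%N -> p0 k 0 = 0) /\
  (forall j, j \notin Js 0%N -> q0 j 0 = 0) /\
  (forall k, k \in Ks N.+1 -> pN k 0 = 0) /\
  (forall j, j \notin Js N.+1 -> qN j 0 = 0) /\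
  (forall j, j \in Js N.+1 -> uN j 0 = 0) /\
  (forall k, k \notin Ks N.+1 -> xN k 0 = 0) /\
  (* (d) *)
  A *m u0 + x0 = beta /\ A^T *m pN - qN = gamma /\
  (* (e) *)
  A *m uN + xN - xcurve x0 xd tau N = 0 /\
  A^T *m p0 - q0 + qcurve N qN qd tau 0%N = 0.

Definition system_nonneg (N : nat) (xd : nat -> 'cV[R]_K) (qd : nat -> 'cV[R]_J)
  (u0 uN qN q0 : 'cV[R]_J) (x0 xN p0 pN : 'cV[R]_K) (tau : nat -> R) : Prop :=
  lecv 0 u0 /\ lecv 0 uN /\ lecv 0 qN /\ lecv 0 q0 /\
  lecv 0 x0 /\ lecv 0 xN /\ lecv 0 p0 /\ lecv 0 pN /\
  (forall n, (1 <= n <= N)%N -> 0 <= tau n) /\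
  (forall n, (n <= N)%N -> lecv 0 (xcurve x0 xd tau n) /\ lecv 0 (qcurve N qN qd tau n)).

Definition blp_feasible (A : 'M[R]_(K, J)) (beta r : 'cV[R]_K) (u0 uN : 'cV[R]_J) : Prop :=
  lecv (A *m u0) beta /\ lecv (A *m u0 + A *m uN) r /\ lecv 0 u0 /\ lecv 0 uN.
Definition blp_optimal (A : 'M[R]_(K, J)) (beta r : 'cV[R]_K) (f g : 'cV[R]_J)
  (u0 uN : 'cV[R]_J) : Prop :=
  blp_feasible A beta r u0 uN /\
  forall u0' uN', blp_feasible A beta r u0' uN' ->
    dotv f u0' + dotv g uN' <= dotv f u0 + dotv g uN.

Definition bdlp_feasible (A : 'M[R]_(K, J)) (gamma s : 'cV[R]_J) (pN p0 : 'cV[R]_K) : Prop :=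
  lecv gamma (A^T *m pN) /\ lecv s (A^T *m pN + A^T *m p0) /\ lecv 0 pN /\ lecv 0 p0.
Definition bdlp_optimal (A : 'M[R]_(K, J)) (gamma s : 'cV[R]_J) (h e : 'cV[R]_K)
  (pN p0 : 'cV[R]_K) : Prop :=
  bdlp_feasible A gamma s pN p0 /\
  forall pN' p0', bdlp_feasible A gamma s pN' p0' ->
    dotv h pN + dotv e p0 <= dotv h pN' + dotv e p0'.

End MCLP.

From HB Require Import structures.
From mathcomp Require Import all_boot all_order all_algebra.
From mathcomp Require Import ring lra.
Set Implicit Arguments. Unset Strict Implicit. Unset Printing Implicit Defensive.
Import Order.TTheory GRing.Theory Num.Theory.
Local Open Scope ring_scope.

(* The boundary LP and its dual form a primal-dual pair, so it suffices to exhibit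
   feasible points with equal objective values.  Summing the basic equations
   A u^n + xdot^n = b and A^T p^n - qdot^n = c weighted by tau_n, with sum tau_n = T,
   (d) and (e) turn the coupling right-hand sides into
   beta + bT - A Uc = A u^0 + A u^N + x^N and gamma + cT - A^T Pc = A^T p^N + A^T p^0 - q^0.
   The slacks x^0, x^N, q^0, q^N are nonnegative, which gives feasibility, and by (c)
   each vanishes where its complementary variable may be nonzero, so both objectives
   equal u0'A'pN + u0'A'p0 + uN'A'pN. *)

Section InnerProduct.
Variables (R : realFieldType) (n : nat).
Implicit Types x y z : 'cV[R]_n.

Lemma dotvE x y : dotv x y = (x^T *m y) 0 0.
Proof. by rewrite /dotv mxE; apply: eq_bigr => i _; rewrite mxE. Qed.

Lemma dotvC x y : dotv x y = dotv y x.
Proof. by apply: eq_bigr => i _; rewrite mulrC. Qed.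

Lemma dotvDl x y z : dotv (x + y) z = dotv x z + dotv y z.
Proof. by rewrite /dotv -big_split; apply: eq_bigr => i _; rewrite mxE mulrDl. Qed.

Lemma dotvBl x y z : dotv (x - y) z = dotv x z - dotv y z.
Proof. by rewrite /dotv -sumrB; apply: eq_bigr => i _; rewrite !mxE mulrBl. Qed.

Lemma ler_dotv2r x y z : lecv 0 z -> lecv x y -> dotv x z <= dotv y z.
Proof.
move=> z_ge0 le_xy; apply: ler_sum => i _; apply: ler_wpM2r; last exact: le_xy.
by have := z_ge0 i; rewrite mxE.
Qed.

Lemma dotv_supp_compl (S : {pred 'I_n}) x y :
  (forall i, i \in S -> y i 0 = 0) -> (forall i, i \notin S -> x i 0 = 0) ->
  dotv x y = 0.
Proof.
move=> yS xSc; apply: big1 => i _.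
by case: (boolP (i \in S)) => [/yS|/xSc] ->; rewrite ?mulr0 ?mul0r.
Qed.

End InnerProduct.

Lemma dotv_mulmx (R : realFieldType) m n (M : 'M[R]_(m, n)) x y :
  dotv x (M *m y) = dotv (M^T *m x) y.
Proof. by rewrite !dotvE trmx_mul trmxK mulmxA. Qed.

Lemma lecv_addr (R : realFieldType) n (x y : 'cV[R]_n) : lecv 0 y -> lecv x (x + y).
Proof. by move=> y_ge0 i; rewrite mxE lerDl; have := y_ge0 i; rewrite mxE. Qed.

Lemma lecv_subr (R : realFieldType) n (x y : 'cV[R]_n) : lecv 0 y -> lecv (x - y) x.
Proof. by move=> y_ge0 i; rewrite !mxE gerDl oppr_le0; have := y_ge0 i; rewrite mxE. Qed.

Lemma sum_scale_residual (R : realFieldType) m n (M : 'M[R]_(m, n)) (rhs : 'cV[R]_m)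
    (w : nat -> 'cV[R]_n) (s : nat -> 'cV[R]_m) (tau : nat -> R) (N : nat) :
  (forall k, (1 <= k <= N)%N -> M *m w k + s k = rhs) ->
  \sum_(1 <= k < N.+1) tau k *: s k
    = (\sum_(1 <= k < N.+1) tau k) *: rhs - M *m \sum_(1 <= k < N.+1) tau k *: w k.
Proof.
move=> eq_rhs; rewrite scaler_suml mulmx_sumr -sumrB.
apply: eq_big_nat => k /andP[k_ge1 k_lt]; rewrite -(eq_rhs k) ?k_ge1 //.
by rewrite -scalemxAr scalerDr addrC addKr.
Qed.

Section BoundaryLP.
Variables (R : realFieldType) (K J : nat) (A : 'M[R]_(K, J)).

Lemma boundary_weak_duality beta r gamma s u0 uN pN p0 :
  blp_feasible A beta r u0 uN -> bdlp_feasible A gamma s pN p0 ->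
  dotv s u0 + dotv gamma uN <= dotv r pN + dotv beta p0.
Proof.
move=> [Au0_le [AuN_le [u0_ge0 uN_ge0]]] [ApN_ge [Ap0_ge [pN_ge0 p0_ge0]]].
apply: (@le_trans _ _ (dotv (A^T *m pN + A^T *m p0) u0 + dotv (A^T *m pN) uN)).
  by apply: lerD; apply: ler_dotv2r.
have -> : dotv (A^T *m pN + A^T *m p0) u0 + dotv (A^T *m pN) uN
        = dotv (A *m u0 + A *m uN) pN + dotv (A *m u0) p0.
  by rewrite !dotvDl -!dotv_mulmx !(dotvC (A *m _)) !dotv_mulmx; ring.
by apply: lerD; apply: ler_dotv2r.
Qed.

Lemma boundary_optimal_of_eq beta r gamma s u0 uN pN p0 :
  blp_feasible A beta r u0 uN -> bdlp_feasible A gamma s pN p0 ->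
  dotv s u0 + dotv gamma uN = dotv r pN + dotv beta p0 ->
  blp_optimal A beta r s gamma u0 uN /\ bdlp_optimal A gamma s r beta pN p0.
Proof.
move=> pfeas dfeas obj_eq; split; split=> //.
  by move=> u0' uN' pfeas'; rewrite obj_eq; apply: boundary_weak_duality pfeas' dfeas.
by move=> pN' p0' dfeas'; rewrite -obj_eq; apply: boundary_weak_duality pfeas dfeas'.
Qed.

Lemma blp_feasible_slack u0 uN x0 xN :
  lecv 0 u0 -> lecv 0 uN -> lecv 0 x0 -> lecv 0 xN ->
  blp_feasible A (A *m u0 + x0) (A *m u0 + A *m uN + xN) u0 uN.
Proof. by move=> *; split; [apply: lecv_addr | split; [apply: lecv_addr | split]]. Qed.

Lemma bdlp_feasible_surplus pN p0 qN q0 :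
  lecv 0 pN -> lecv 0 p0 -> lecv 0 qN -> lecv 0 q0 ->
  bdlp_feasible A (A^T *m pN - qN) (A^T *m pN + A^T *m p0 - q0) pN p0.
Proof. by move=> *; split; [apply: lecv_subr | split; [apply: lecv_subr | split]]. Qed.

Lemma boundary_objective_compl u0 uN qN q0 x0 xN pN p0 :
  dotv q0 u0 = 0 -> dotv qN uN = 0 -> dotv xN pN = 0 -> dotv x0 p0 = 0 ->
  dotv (A^T *m pN + A^T *m p0 - q0) u0 + dotv (A^T *m pN - qN) uN
    = dotv (A *m u0 + A *m uN + xN) pN + dotv (A *m u0 + x0) p0.
Proof.
move=> q0u0 qNuN xNpN x0p0; rewrite !dotvBl !dotvDl q0u0 qNuN xNpN x0p0.
by rewrite !(dotvC (A *m _)) !dotv_mulmx; ring.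
Qed.

End BoundaryLP.

Theorem mainTheorem3 (R : realFieldType) (K J : nat) (A : 'M[R]_(K, J))
  (beta b : 'cV[R]_K) (gamma c : 'cV[R]_J) (T : R) (N : nat)
  (Ks : nat -> {set 'I_K}) (Js : nat -> {set 'I_J})
  (u : nat -> 'cV[R]_J) (xd : nat -> 'cV[R]_K)
  (p : nat -> 'cV[R]_K) (qd : nat -> 'cV[R]_J) (v : nat -> pvar K J)
  (tau : nat -> R)
  (u0 uN qN q0 : 'cV[R]_J) (x0 xN p0 pN : 'cV[R]_K) :
  0 < T ->
  nondeg_I A b c ->
  base_sequence A b c N Ks Js u xd p qd v ->
  base_seq_system A beta gamma T N Ks Js xd qd v u0 uN qN q0 x0 xN p0 pN tau ->
  system_nonneg N xd qd u0 uN qN q0 x0 xN p0 pN tau ->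
  let Uc := \sum_(1 <= n < N.+1) tau n *: u n in
  let Pc := \sum_(1 <= n < N.+1) tau n *: p n in
  blp_optimal A beta (beta + T *: b - A *m Uc) (gamma + T *: c - A^T *m Pc) gamma u0 uN /\
  bdlp_optimal A gamma (gamma + T *: c - A^T *m Pc) (beta + T *: b - A *m Uc) beta pN p0.
Proof.
move=> _ _ [_ [adm _]] [_ [sum_tau [u0S [x0S [p0S [q0S [pNS [qNS [uNS [xNS
  [eq_beta [eq_gamma [eq_xN eq_q0]]]]]]]]]]]]]
  [u0_ge0 [uN_ge0 [qN_ge0 [q0_ge0 [x0_ge0 [xN_ge0 [p0_ge0 [pN_ge0 _]]]]]]]] Uc Pc.
have sum_xd : \sum_(1 <= n < N.+1) tau n *: xd n = T *: b - A *m Uc.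
  by rewrite (@sum_scale_residual _ _ _ A b u) ?sum_tau // => k /adm[_ [[]]].
have sum_qd : \sum_(1 <= n < N.+1) tau n *: qd n = A^T *m Pc - T *: c.
  rewrite (@sum_scale_residual _ _ _ (- A^T) (- c) p) ?sum_tau.
    by rewrite scalerN mulNmx opprK addrC.
  by move=> k /adm[_ [_ [[<- _] _]]]; rewrite mulNmx opprB addrC.
have -> : beta + T *: b - A *m Uc = A *m u0 + A *m uN + xN.
  apply/matrixP => i j; move: eq_xN sum_xd eq_beta.
  move=> /matrixP/(_ i j) + /matrixP/(_ i j) + /matrixP/(_ i j).
  rewrite /xcurve !mxE; lra.
have -> : gamma + T *: c - A^T *m Pc = A^T *m pN + A^T *m p0 - q0.
  apply/matrixP => i j; move: eq_q0 sum_qd eq_gamma.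
  move=> /matrixP/(_ i j) + /matrixP/(_ i j) + /matrixP/(_ i j).
  rewrite /qcurve !mxE; lra.
rewrite -eq_beta -eq_gamma.
apply: boundary_optimal_of_eq.
- exact: blp_feasible_slack.
- exact: bdlp_feasible_surplus.
apply: boundary_objective_compl.
- exact: (dotv_supp_compl (S := Js 0%N)).
- exact: (dotv_supp_compl (S := Js N.+1)).
- exact: (dotv_supp_compl (S := Ks N.+1)).
- exact: (dotv_supp_compl (S := Ks 0%N)).
Qed.
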